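(* Let $(D,\tau,d,\Delta)$ be a TMO instance with optimal makespan $\mathrm{OPT}$ (with $t$ reachable from $s$). Then there exists a flow over time in $D$ with unit arc capacities and transit times $\tau$, with time horizon $\mathrm{OPT}+\Delta$ and value at least $d\cdot\Delta$.
   Context: TMO instance $(D,\tau,d,\Delta)$: directed graph $D=(V,A)$ with source $s$, sink $t$, travel times $\tau:A\to\mathbb{Z}_{\ge0}$, $d\in\mathbb{Z}_{\ge1}$ trains, headway $\Delta\in\mathbb{Z}_{\ge1}$. A train routing assigns to each train $i\in[d]$ an $s$-$t$-path $P_i$ and entry times $\lambda_i:P_i\to\mathbb{Z}_{\ge0}$; it is feasible if $\lambda_i(a)+\tau_a\le\lambda_i(a')$ for consecutive arcs $a,a'$ of $P_i$ and $|\lambda_i(a)-\lambda_{i'}(a)|\ge\Delta$ for $i\ne i'$, $a\in P_i\cap P_{i'}$; makespan $=\max_i\max_{a\in P_i}(\lambda_i(a)+\tau_a)$; $\mathrm{OPT}$ is the minimum makespan. A flow over time with unit capacities and time horizon $T$ (continuous-time model) consists of measurable inflow rate functions $f_a:\mathbb{R}\to[0,1]$, $a\in A$, with $f_a(\theta)=0$ for $\theta\notin[0,T-\tau_a)$, where flow entering $a$ at time $\theta$ leaves $a$ at time $\theta+\tau_a$, satisfying flow conservation without storage at every $v\notin\{s,t\}$: $\sum_{a\in\delta^-(v)}f_a(\theta-\tau_a)=\sum_{a\in\delta^+(v)}f_a(\theta)$ for almost all $\theta$. Its value is the net amount of flow arriving at $t$ by time $T$, $\sum_{a\in\delta^-(t)}\int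 f_a-\sum_{a\in\delta^+(t)}\int f_a$. *)

From HB Require Import structures.
From mathcomp Require Import all_boot all_order all_algebra.
From mathcomp Require Import all_classical all_reals all_analysis.
Set Implicit Arguments. Unset Strict Implicit. Unset Printing Implicit Defensive.
Import Order.TTheory GRing.Theory Num.Theory.

(* A directed graph D = (V, A) is given by finite types V, A and maps
   tl hd : A -> V (tail and head of an arc); parallel arcs are allowed. *)

Definition is_st_path (V A : finType) (tl hd : A -> V) (s t : V) (p : seq A)
  : bool :=
  match p with
  | [::] => false
  | a0 :: p' =>
      [&& tl a0 == s, path (fun a b => hd a == tl b) a0 p',
          hd (last a0 p') == t & uniq (tl a0 :: map hd p)]
  end.

Definition reachable (V A : finType) (tl hd : A -> V) (s t : V) : bool :=
  connect (fun u v => [exists a, (tl a == u) && (hd a == v)]) s t.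

(* A train routing: for each train i < d an s-t-path P i and entry times
   lam i : A -> nat (only the values on arcs of P i matter). *)
Definition feasible_routing (V A : finType) (tl hd : A -> V) (s t : V)
  (tau : A -> nat) (d Delta : nat)
  (P : 'I_d -> seq A) (lam : 'I_d -> A -> nat) : Prop :=
  (forall i, is_st_path tl hd s t (P i)) /\
  (forall i, sorted (fun a b => lam i a + tau a <= lam i b)%N (P i)) /\
  (forall i i', i != i' -> forall a, a \in P i -> a \in P i' ->
     (lam i a + Delta <= lam i' a)%N || (lam i' a + Delta <= lam i a)%N).

Definition makespan (A : finType) (tau : A -> nat) (d : nat)
  (P : 'I_d -> seq A) (lam : 'I_d -> A -> nat) : nat :=
  \max_(i < d) \max_(a <- P i) (lam i a + tau a).

Definition is_OPT (V A : finType) (tl hd : A -> V) (s t : V)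
  (tau : A -> nat) (d Delta : nat) (OPT : nat) : Prop :=
  (exists (P : 'I_d -> seq A) (lam : 'I_d -> A -> nat), feasible_routing tl hd s t tau Delta P lam /\
                 makespan tau P lam = OPT) /\
  (forall (P : 'I_d -> seq A) (lam : 'I_d -> A -> nat), feasible_routing tl hd s t tau Delta P lam ->
                 (OPT <= makespan tau P lam)%N).

Local Open Scope ring_scope.

(* Flow over time with unit capacities, transit times tau and horizon T
   (continuous-time model): measurable inflow rates f a : R -> [0,1],
   vanishing outside [0, T - tau a), with flow conservation without storage
   at every v not in {s,t} for almost all theta. *)
Definition flow_over_time (R : realType) (V A : finType) (tl hd : A -> V)
  (s t : V) (tau : A -> nat) (T : R) (f : A -> R -> R) : Prop :=
  (forall a, measurable_fun setT (f a)) /\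
  (forall a x, 0 <= f a x <= 1) /\
  (forall a x, ~ (0 <= x /\ x < T - (tau a)%:R) -> f a x = 0) /\
  (forall v, v != s -> v != t ->
     {ae (@lebesgue_measure R), forall x,
        \sum_(a | hd a == v) f a (x - (tau a)%:R) =
        \sum_(a | tl a == v) f a x}).

Definition fot_value (R : realType) (V A : finType) (tl hd : A -> V)
  (t : V) (f : A -> R -> R) : \bar R :=
  (\sum_(a | hd a == t) (\int[@lebesgue_measure R]_x (f a x)%:E)
   - \sum_(a | tl a == t) (\int[@lebesgue_measure R]_x (f a x)%:E))%E.

From HB Require Import structures.
From mathcomp Require Import all_boot all_order all_algebra.
From mathcomp Require Import all_classical all_reals all_analysis measurable_realfun.
From mathcomp Require Import zify ring.
Set Implicit Arguments. Unset Strict Implicit. Unset Printing Implicit Defensive.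
Import Order.TTheory GRing.Theory Num.Theory.
Local Open Scope ring_scope.

(* Let T = OPT + Delta and choose a 0/1 s-t-flow x, conserved at all inner
   vertices, maximizing T * |x| - cost(x).  Decomposing x into s-t-paths and
   sending flow along each path P during [0, T - tau(P)) yields a flow over
   time of value at least T * |x| - cost(x) (Ford-Fulkerson's temporally
   repeated flow).

   By optimality, the residual network of x extended by a return arc from t
   to s of cost -T has no negative cycle, so it has feasible potentials pi;
   these satisfy pi t - pi s = T and
     T * |x| - cost(x) = sum_a max(0, pi (hd a) - pi (tl a) - tau a).

   An optimal train routing bounds this sum from below: train i, delayed by
   delta < Delta, enters its first arc at a time >= 0 = pi s - pi s and
   leaves its last arc at a time < T = pi t - pi s, so along some arc a it
   enters at a time theta >= pi (tl a) - pi s and leaves before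
   pi (hd a) - pi s.  By the headway condition the d * Delta pairs
   (a, theta) so obtained are distinct, while arc a admits at most
   max(0, pi (hd a) - pi (tl a) - tau a) such times theta. *)

Lemma big_split_mem (E : finType) (M : nmodType) (P : pred E) (Q : seq E)
    (G G1 G2 : E -> M) :
  (forall a, a \in Q -> G a = G1 a /\ G2 a = 0) ->
  (forall a, a \notin Q -> G a = G2 a) ->
  \sum_(a | P a) G a = \sum_(a | P a && (a \in Q)) G1 a + \sum_(a | P a) G2 a.
Proof.
move=> inQ notinQ; rewrite big_mkcondr -big_split /=; apply: eq_bigr => a _.
case: (boolP (a \in Q)) => aQ; last by rewrite notinQ // add0r.
by have [-> ->] := inQ a aQ; rewrite addr0.
Qed.

Lemma big_mem_cons (E : finType) (M : nmodType) (P : pred E) (G : E -> M) a0 q :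
  a0 \notin q ->
  \sum_(a | P a && (a \in a0 :: q)) G a = G a0 *+ P a0 + \sum_(a | P a && (a \in q)) G a.
Proof.
move=> a0q; case: (boolP (P a0)) => Pa0.
  rewrite (bigD1 a0) /= ?inE ?eqxx ?Pa0 // mulr1n; congr (_ + _).
  apply: eq_bigl => a; rewrite inE.
  by case: (eqVneq a a0) => [->|] /=; rewrite ?(negbTE a0q) ?andbF ?andbT.
rewrite mulr0n add0r; apply: eq_bigl => a; rewrite inE.
by case: (eqVneq a a0) => [->|] //=; rewrite (negbTE a0q) (negbTE Pa0).
Qed.

Lemma big_fiber (I J : finType) (M : nmodType) (f : I -> J) (P : pred J)
    (G : J -> I -> M) :
  \sum_(j | P j) \sum_(i | f i == j) G j i = \sum_(i | P (f i)) G (f i) i.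
Proof.
rewrite (partition_big f P) //=; apply: eq_bigr => j Pj.
by apply: eq_big => [i|i /eqP ->]; rewrite // andb_idl // => /eqP ->.
Qed.

Lemma big_uniq_sumType (I J : finType) (M : nmodType) (C : seq (I + J))
    (F : I + J -> M) : uniq C ->
  \sum_(e <- C) F e = \sum_i (if inl i \in C then F (inl i) else 0)
                     + \sum_j (if inr j \in C then F (inr j) else 0).
Proof. by move=> uC; rewrite (big_uniq _ uC) big_mkcond big_sumType. Qed.

Section Walks.
Variables (V E : finType) (tl hd : E -> V) (tau : E -> nat).

Definition walk_length (q : seq E) : nat := (\sum_(b <- q) tau b)%N.

(* The time at which the walk [q], started at time [c0], enters its arc [a]
   (first occurrence; [0] if [a] is not on [q]). *)
Fixpoint entry_time (q : seq E) (c0 : nat) (a : E) : nat :=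
  if q is b :: q' then (if a == b then c0 else entry_time q' (c0 + tau b)%N a)
  else 0%N.

Lemma entry_time_le q a0 c0 a : a \in a0 :: q ->
  (entry_time (a0 :: q) c0 a + tau a <= c0 + walk_length (a0 :: q))%N.
Proof.
elim: q a0 c0 => [|a1 q IH] a0 c0 /=.
  by rewrite inE => /eqP ->; rewrite eqxx /walk_length big_seq1.
rewrite inE /walk_length big_cons; case: (eqVneq a a0) => [->|_] /=; first lia.
by move=> /(IH a1 (c0 + tau a0)%N); rewrite /walk_length /= big_cons; lia.
Qed.

Lemma telescope_walk (M : zmodType) (F : nat -> M) v q a0 c0 :
  path (fun a b => hd a == tl b) a0 q -> uniq (a0 :: q) ->
  \sum_(a | (hd a == v) && (a \in a0 :: q)) F (entry_time (a0 :: q) c0 a + tau a)%N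
  - \sum_(a | (tl a == v) && (a \in a0 :: q)) F (entry_time (a0 :: q) c0 a)
  = F (c0 + walk_length (a0 :: q))%N *+ (hd (last a0 q) == v)
    - F c0 *+ (tl a0 == v).
Proof.
elim: q a0 c0 => [|a1 q IH] a0 c0 /=.
  move=> _ _; rewrite !(@big_mem_cons _ _ _ _ a0 [::]) // !big_pred0 => [|a|a].
  - by rewrite !addr0 /= eqxx /walk_length big_seq1.
  - by rewrite in_nil andbF.
  - by rewrite in_nil andbF.
move=> /andP [/eqP hd_a0 walk_q] /andP [a0q uniq_q].
rewrite !(@big_mem_cons _ _ _ _ a0 (a1 :: q)) //= eqxx.
have later_arcs (G : E -> nat -> M) P :
    \sum_(a | P a && (a \in a1 :: q))
       G a (if a == a0 then c0 else entry_time (a1 :: q) (c0 + tau a0) a)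
  = \sum_(a | P a && (a \in a1 :: q)) G a (entry_time (a1 :: q) (c0 + tau a0) a).
  apply: eq_bigr => a /andP [_ aq].
  by case: (eqVneq a a0) => [e|//]; rewrite -e aq in a0q.
rewrite (later_arcs (fun a n => F (n + tau a)%N)) (later_arcs (fun a n => F n)).
rewrite opprD addrACA IH // -hd_a0 /walk_length /= !big_cons !addnA.
by rewrite addrC addrA subrK addrC.
Qed.

End Walks.

Section Potentials.
Variables (V E : finType) (tl hd : E -> V) (c : E -> int).

(* [W] is a walk whose last arc enters [v]; the empty walk ends anywhere. *)
Fixpoint walk_to (v : V) (W : seq E) : bool :=
  if W is e :: W' then
    (if W' is f :: _ then hd e == tl f else hd e == v) && walk_to v W'
  else true.

Definition walk_cost (W : seq E) : int := \sum_(e <- W) c e.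

Lemma walk_to_cat u W1 e W2 :
  walk_to u (W1 ++ e :: W2) = walk_to (tl e) W1 && walk_to u (e :: W2).
Proof.
elim: W1 => [|a W1 IH] //=; rewrite IH.
by case: W1 IH => [|b W1'] IH /=; rewrite ?andbT ?andbA.
Qed.

Lemma telescope_walk_to (v u : V) W e : walk_to u (e :: W) ->
  \sum_(x <- e :: W) ((hd x == v)%:R - (tl x == v)%:R : int)
  = (u == v)%:R - (tl e == v)%:R.
Proof.
elim: W e => [|f W IH] e /=; first by rewrite andbT => /eqP <-; rewrite big_seq1.
by move=> /andP [/eqP ef wf]; rewrite big_cons IH // -ef; ring.
Qed.

Lemma walk_cost_ge W : uniq W -> - \sum_e `|c e| <= walk_cost W.
Proof.
move=> uW; rewrite /walk_cost (big_uniq _ uW) lerNl -sumrN big_mkcond /=.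
by apply: ler_sum => e _; case: ifP => _ //; lia.
Qed.

Hypothesis no_negative_cycle : forall e0 W,
  uniq (e0 :: W) -> walk_to (tl e0) (e0 :: W) -> 0 <= walk_cost (e0 :: W).

Lemma min_cost_walk v : exists W0, [/\ uniq W0, walk_to v W0 &
  forall W, uniq W -> walk_to v W -> walk_cost W0 <= walk_cost W].
Proof.
(* Walk costs are bounded below by [-B], so [ex_minn] applies to the costs
   shifted by [B]. *)
pose B := \sum_e `|c e|.
pose shifted_cost n := `[< exists W, [/\ uniq W, walk_to v W & walk_cost W + B = n%:Z] >].
have B_ge0 : 0 <= B by apply: sumr_ge0 => e _.
have ex_n : exists n, shifted_cost n.
  exists (absz B); apply/asboolP; exists [::].
  by split; rewrite // /walk_cost big_nil add0r gez0_abs.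
have [n0 /asboolP [W0 [uW0 wW0 cW0]] min_n0] := ex_minnP ex_n.
exists W0; split => // W uW wW.
have cW_ge : 0 <= walk_cost W + B by rewrite -lerBlDr sub0r; exact: walk_cost_ge.
have /min_n0 : shifted_cost (absz (walk_cost W + B)).
  by apply/asboolP; exists W; rewrite gez0_abs.
by rewrite -(lerD2r B) cW0; lia.
Qed.

(* Potentials are costs of cheapest simple walks; if the cheapest walk to
   [tl e] already uses [e], cutting off the cycle it closes is no loss. *)
Lemma potential_exists : exists pi : V -> int, forall e, pi (hd e) <= pi (tl e) + c e.
Proof.
have [W_to walk_toP] := choice min_cost_walk.
exists (fun v => walk_cost (W_to v)) => e.
have [_ _ min_hd] := walk_toP (hd e).
move: (walk_toP (tl e)); move: (W_to (tl e)) => W0 [uW0 wW0 _].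
have cost_rcons W : walk_cost (rcons W e) = walk_cost W + c e.
  by rewrite /walk_cost -cats1 big_cat big_seq1.
have walk_rcons W : walk_to (tl e) W -> walk_to (hd e) (rcons W e).
  by move=> wW; rewrite -cats1 walk_to_cat wW /= eqxx.
case: (boolP (e \in W0)) => eW0; last first.
  by rewrite -cost_rcons min_hd ?rcons_uniq ?eW0 ?walk_rcons.
case/splitPr: eW0 uW0 wW0 => W1 W2.
rewrite cat_uniq walk_to_cat => /and3P [uW1 /hasPn eW1 uW2] /andP [wW1 wW2].
apply: le_trans (min_hd (rcons W1 e) _ _) _;
  rewrite ?rcons_uniq ?(eW1 e (mem_head _ _)) ?walk_rcons //.
rewrite cost_rcons /walk_cost big_cat /= lerD2r lerDl.
exact: no_negative_cycle.
Qed.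

End Potentials.

Section Window.
Variable R : realType.

Definition window (c w : nat) (x : R) : R :=
  if (c%:R <= x) && (x < (c + w)%:R) then 1 else 0.

Lemma window0 c x : window c 0 x = 0.
Proof. by rewrite /window addn0; case: leP => //= h; rewrite ltNge h. Qed.

Lemma window_shift c w k x : window c w (x - k%:R) = window (c + k) w x.
Proof. by rewrite /window !natrD lerBrDr ltrBlDr [_ + w%:R + _]addrAC. Qed.

Lemma window_ge0_le1 c w x : 0 <= window c w x <= 1.
Proof. by rewrite /window; case: ifP; rewrite ?lexx ?ler01. Qed.

Lemma window_neq0 c w x : window c w x != 0 -> c%:R <= x < (c + w)%:R.
Proof. by rewrite /window; case: ifP => // _; rewrite eqxx. Qed.

Local Open Scope classical_set_scope.

Lemma windowE c w : window c w = \1_(`[(c%:R : R), (c + w)%:R[).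
Proof. by apply/funext => x; rewrite /window indicE mem_setE in_itv /=; case: ifP. Qed.

Lemma measurable_window c w : measurable_fun setT (window c w).
Proof. by rewrite windowE; apply: measurable_indic; exact: measurable_itv. Qed.

Lemma integral_window c w :
  (\int[@lebesgue_measure R]_x (window c w x)%:E = (w%:R)%:E)%E.
Proof.
rewrite windowE (integral_indic _ measurableT) ?setIT; last exact: measurable_itv.
have /= -> := lebesgue_measure_itv (Interval (BLeft (c%:R : R)) (BLeft (c + w)%:R)).
rewrite lte_fin ltr_nat; case: ltnP => h.
  by rewrite -EFinB natrD addrAC subrr add0r.
by have -> : w = 0%N by lia.
Qed.

End Window.

Section StaticFlows.
Variables (V A : finType) (tl hd : A -> V) (s t : V) (tau : A -> nat) (T : nat).
Hypothesis s_neq_t : s != t.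

Definition excess (x : A -> bool) v : int :=
  \sum_(a | hd a == v) (x a)%:R - \sum_(a | tl a == v) (x a)%:R.

Definition conserving (x : A -> bool) : bool :=
  [forall v, (v != s) ==> (v != t) ==> (excess x v == 0)].

Definition flow_value x := excess x t.

Definition flow_cost (x : A -> bool) : int := \sum_a (x a * tau a)%:R.

(* The value of the temporally repeated flow of [x] with time horizon [T]. *)
Definition repeated_value x : int := T%:R * flow_value x - flow_cost x.

Lemma conserving_excess x v : conserving x -> v != s -> v != t -> excess x v = 0.
Proof. by move=> /forallP /(_ v) /implyP H /H /implyP H' /H' /eqP. Qed.

Lemma sum_excess x (P : pred V) : \sum_(v | P v) excess x v =
  \sum_(a | P (hd a)) (x a)%:R - \sum_(a | P (tl a)) (x a)%:R.
Proof. by rewrite sumrB !(big_fiber _ _ (fun _ a => (x a)%:R)). Qed.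

Lemma excess_source x : conserving x -> excess x s = - flow_value x.
Proof.
move=> cx; have := sum_excess x predT; rewrite /= subrr.
rewrite (bigD1 s) // (bigD1 t) 1?eq_sym //= big1 ?addr0.
  by move/eqP; rewrite addr_eq0 => /eqP.
by move=> v /andP [vs vt]; apply: conserving_excess.
Qed.

Definition support_edge (x : A -> bool) u v :=
  [exists a, [&& x a, tl a == u & hd a == v]].

(* The vertices reachable from [s] in the support of [x] form a set without
   net inflow, so it cannot avoid [t] once the value is positive. *)
Lemma conserving_connect x : conserving x -> 0 < flow_value x ->
  connect (support_edge x) s t.
Proof.
move=> cx val_gt0; apply/negPn/negP => not_st.
pose S := [set v | connect (support_edge x) s v].
have excess_S : \sum_(v in S) excess x v = excess x s.
  rewrite (bigD1 s) /= ?inE ?connect0 // big1 ?addr0 // => v /andP [].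
  rewrite inE => sv vs; apply: conserving_excess => //.
  by apply: contraNneq not_st => vt; rewrite -vt.
have : 0 <= \sum_(v in S) excess x v.
  rewrite sum_excess subr_ge0 [leRHS]big_mkcond [leLHS]big_mkcond /=.
  apply: ler_sum => a _; case: (boolP (x a)) => xa /=; last by case: ifP; case: ifP.
  case: (boolP (tl a \in S)) => [|_]; last by case: ifP.
  rewrite !inE => sa; suff -> : connect (support_edge x) s (hd a) by [].
  apply: connect_trans sa (connect1 _).
  by apply/existsP; exists a; rewrite xa !eqxx.
by rewrite excess_S excess_source // oppr_ge0 leNgt val_gt0.
Qed.

Lemma support_arc_path x p u : path (support_edge x) u p -> p != [::] ->
  exists a0 q, [/\ path (fun a b => hd a == tl b) a0 q, tl a0 = u,
                   map hd (a0 :: q) = p & all x (a0 :: q)].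
Proof.
elim: p u => [//|v p IH] u /= /andP [/existsP [a /and3P [xa /eqP tla /eqP hda]] pp] _.
case: p IH pp => [|v' p'] IH pp; first by exists a, [::]; rewrite /= hda xa.
have [a1 [q [pq tla1 mq aq]]] := IH v pp isT.
exists a, (a1 :: q); split => //=; first by rewrite tla1 hda eqxx.
- by rewrite hda -mq.
- by rewrite xa.
Qed.

Lemma conserving_st_path x : conserving x -> 0 < flow_value x ->
  exists a0 q, [/\ path (fun a b => hd a == tl b) a0 q, uniq (a0 :: q),
                   tl a0 = s, hd (last a0 q) = t & all x (a0 :: q)].
Proof.
move=> cx val_gt0; have /connectP [p pp tp] := conserving_connect cx val_gt0.
case: (shortenP pp) tp => p' pp' /andP [_ uniq_p'] _ tp.
have : p' != [::] by apply: contra_neq s_neq_t => p'0; rewrite tp p'0.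
case/(support_arc_path pp') => a0 [q [pq tla mq aq]].
exists a0, q; split => //; first by apply: (map_uniq (f := hd)); rewrite mq.
by rewrite tp -mq /= last_map.
Qed.

Variable R : realType.

(* Arc [a] carries flow at rate one during [[c a, c a + w a)]. *)
Definition repeated_schedule (x : A -> bool) (c w : A -> nat) :=
  [/\ forall a, (0 < w a)%N -> x a,
      forall a, (0 < w a)%N -> (c a + w a + tau a <= T)%N,
      forall v, v != s -> v != t -> forall r : R,
        \sum_(a | hd a == v) window (c a + tau a) (w a) r
        = \sum_(a | tl a == v) window (c a) (w a) r
    & repeated_value x
      <= (\sum_(a | hd a == t) w a)%:R - (\sum_(a | tl a == t) w a)%:R].

Lemma repeated_schedule0 x :
  flow_value x <= 0 -> repeated_schedule x (fun=> 0%N) (fun=> 0%N).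
Proof.
move=> val_le0; split => //.
  by move=> v _ _ r; rewrite !big1 // => a _; rewrite window0.
rewrite !big1 // subrr /repeated_value subr_le0.
apply: le_trans (mulr_ge0_le0 (ler0n _ T) val_le0) _.
by apply: sumr_ge0 => a _; rewrite ler0n.
Qed.

Section RemovePath.
Variables (x : A -> bool) (a0 : A) (q : seq A).
Hypotheses (walk_q : path (fun a b => hd a == tl b) a0 q) (uniq_q : uniq (a0 :: q))
  (tl_a0 : tl a0 = s) (hd_q : hd (last a0 q) = t) (x_q : all x (a0 :: q)).

Definition remove_path a := x a && (a \notin a0 :: q).

Lemma excess_remove_path v :
  excess x v = excess remove_path v + ((t == v)%:R - (s == v)%:R).
Proof.
have split_x (P : pred A) : \sum_(a | P a) ((x a)%:R : int) =
    \sum_(a | P a && (a \in a0 :: q)) 1 + \sum_(a | P a) (remove_path a)%:R.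
  apply: big_split_mem => a aq; rewrite /remove_path ?aq ?andbT ?andbF //.
  by rewrite (allP x_q a aq).
rewrite /excess !split_x.
have := telescope_walk tau (fun _ => (1 : int)) v 0 walk_q uniq_q.
by rewrite hd_q tl_a0 => <-; ring.
Qed.

Lemma conserving_remove_path : conserving x -> conserving remove_path.
Proof.
move=> cx; apply/forallP => v; apply/implyP => vs; apply/implyP => vt.
have := excess_remove_path v; rewrite conserving_excess //.
by rewrite eq_sym (negbTE vt) eq_sym (negbTE vs) subrr addr0 => <-.
Qed.

Lemma flow_value_remove_path : flow_value x = flow_value remove_path + 1.
Proof. by rewrite /flow_value excess_remove_path eqxx (negbTE s_neq_t) subr0. Qed.

Lemma flow_cost_remove_path :
  flow_cost x = flow_cost remove_path + (walk_length tau (a0 :: q))%:R.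
Proof.
rewrite /flow_cost (@big_split_mem _ _ predT (a0 :: q) _ (fun a => (tau a)%:R)
  (fun a => (remove_path a * tau a)%:R)).
- by rewrite addrC /walk_length (big_uniq _ uniq_q) natr_sum.
- by move=> a aq; rewrite /remove_path aq andbF (allP x_q a aq) mul1n.
- by move=> a aq; rewrite /remove_path aq andbT.
Qed.

Lemma support_remove_path : (\sum_a remove_path a < \sum_a x a)%N.
Proof.
rewrite (bigD1 a0) //= [X in (_ < X)%N](bigD1 a0) //= /remove_path mem_head andbF.
rewrite (allP x_q a0) ?mem_head // add0n add1n ltnS leq_sum // => a _.
by case: (x a); case: (a \notin a0 :: q).
Qed.

Lemma repeated_value_remove_path : repeated_value x
  = repeated_value remove_path + (T%:R - (walk_length tau (a0 :: q))%:R).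
Proof.
by rewrite /repeated_value flow_value_remove_path flow_cost_remove_path; ring.
Qed.

Local Notation W := (T - walk_length tau (a0 :: q))%N.
Let on_path (f g : A -> nat) a := if a \in a0 :: q then f a else g a.

Lemma repeated_schedule_add_path c' w' : (walk_length tau (a0 :: q) < T)%N ->
  repeated_schedule remove_path c' w' ->
  repeated_schedule x (on_path (entry_time tau (a0 :: q) 0) c') (on_path (fun=> W) w').
Proof.
move=> path_short [w'_supp w'_horizon w'_cons w'_value].
have w'_path a : a \in a0 :: q -> w' a = 0%N.
  move=> aq; apply/eqP; rewrite -leqn0 leqNgt; apply: contraTN aq => /w'_supp.
  by rewrite /remove_path => /andP [].
have split_path (M : nmodType) (P : pred A) (F : A -> nat -> nat -> M) :
    (forall a n, F a n 0%N = 0) ->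
    \sum_(a | P a)
      F a (on_path (entry_time tau (a0 :: q) 0) c' a) (on_path (fun=> W) w' a)
    = \sum_(a | P a && (a \in a0 :: q)) F a (entry_time tau (a0 :: q) 0 a) W
      + \sum_(a | P a) F a (c' a) (w' a).
  move=> F0; apply: big_split_mem => a; rewrite /on_path; last by move/negbTE->.
  by move=> aq; rewrite aq w'_path.
split.
- move=> a; rewrite /on_path; case: ifP => [aq _|_ /w'_supp /andP [] //].
  exact: (allP x_q).
- move=> a; rewrite /on_path; case: ifP => [aq _|_]; last exact: w'_horizon.
  have := entry_time_le tau 0 aq; rewrite /=; lia.
- move=> v vs vt r.
  rewrite (split_path _ _ (fun a c w => window (c + tau a) w r)); last first.
    by move=> *; rewrite window0.
  rewrite (split_path _ _ (fun a c w => window c w r)); last by move=> *; rewrite window0.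
  rewrite w'_cons //; congr (_ + _); apply/eqP; rewrite -subr_eq0.
  rewrite (telescope_walk tau (fun n => window n W r) v 0 walk_q uniq_q).
  by rewrite hd_q tl_a0 (eq_sym t) (negbTE vt) (eq_sym s) (negbTE vs) subrr.
- rewrite !natr_sum in w'_value *.
  rewrite !(split_path _ _ (fun _ _ w => (w%:R : int))) //.
  rewrite opprD addrACA repeated_value_remove_path.
  rewrite [leLHS]addrC; apply: lerD w'_value.
  rewrite le_eqVlt; apply/orP; left; apply/eqP.
  have := telescope_walk tau (fun=> (W%:R : int)) t 0 walk_q uniq_q.
  rewrite hd_q tl_a0 eqxx (negbTE s_neq_t) mulr0n subr0 mulr1n => ->.
  by rewrite natrB // ltnW.
Qed.

End RemovePath.

Lemma repeated_schedule_exists x : conserving x -> exists c w, repeated_schedule x c w.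
Proof.
have [n] := ubnP (\sum_a x a)%N; elim: n x => // n IH x supp_x cx.
have [val_le0|val_gt0] := lerP (flow_value x) 0.
  by do 2 eexists; exact: repeated_schedule0.
have [a0 [q [walk_q uniq_q tl_a0 hd_q x_q]]] := conserving_st_path cx val_gt0.
have [||c' [w' sched']] := IH (remove_path x a0 q).
- exact: leq_trans (support_remove_path x_q) supp_x.
- exact: conserving_remove_path.
have [path_short|path_long] := ltnP (walk_length tau (a0 :: q)) T.
  by do 2 eexists; apply: repeated_schedule_add_path path_short sched'.
exists c', w'; case: sched' => w'_supp ? ? w'_value; split => //.
- by move=> a /w'_supp /andP [].
- apply: le_trans w'_value.
  rewrite (repeated_value_remove_path walk_q uniq_q tl_a0 hd_q x_q).
  by rewrite gerDl subr_le0 ler_nat.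
Qed.

Lemma flow_over_time_of_schedule (c w : A -> nat) :
  (forall a, (0 < w a)%N -> (c a + w a + tau a <= T)%N) ->
  (forall v, v != s -> v != t -> forall r : R,
     \sum_(a | hd a == v) window (c a + tau a) (w a) r
     = \sum_(a | tl a == v) window (c a) (w a) r) ->
  flow_over_time tl hd s t tau (T%:R : R) (fun a => window (c a) (w a)) /\
  fot_value tl hd t (fun a => window (c a) (w a))
  = ((\sum_(a | hd a == t) w a)%:R - (\sum_(a | tl a == t) w a)%:R : R)%:E.
Proof.
move=> horizon cons; split; first split.
- by move=> a; exact: measurable_window.
split; first by move=> a r; exact: window_ge0_le1.
split.
  move=> a r r_out; case: (eqVneq (window (c a) (w a) r) 0) => // /window_neq0.
  case/andP => c_le r_lt; exfalso; apply: r_out.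
  have w_gt0 : (0 < w a)%N.
    by rewrite lt0n; apply: contraTneq r_lt => ->; rewrite addn0 -leNgt.
  split; first exact: le_trans c_le.
  apply: lt_le_trans r_lt _; rewrite lerBrDr -!natrD ler_nat.
  exact: horizon.
- move=> v vs vt; apply: aeW => r.
  under eq_bigr do rewrite window_shift.
  exact: cons.
- rewrite /fot_value.
  rewrite (eq_bigr (fun a => ((w a)%:R : R)%:E)); last by move=> a _; exact: integral_window.
  rewrite [X in (_ - X)%E](eq_bigr (fun a => ((w a)%:R : R)%:E)); last first.
    by move=> a _; exact: integral_window.
  by rewrite !sumEFin -EFinB !natr_sum.
Qed.

End StaticFlows.

Section ResidualNetwork.
Variables (V A : finType) (tl hd : A -> V) (s t : V) (tau : A -> nat) (T : nat).
Hypothesis s_neq_t : s != t.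

Local Notation excess := (excess tl hd).
Local Notation conserving := (conserving tl hd s t).
Local Notation flow_value := (flow_value tl hd t).
Local Notation flow_cost := (flow_cost tau).
Local Notation repeated_value := (repeated_value tl hd t tau T).

(* Residual network of [x], extended by a return arc [inr true] from [t] to
   [s] of cost [-T] and its reverse [inr false]: the arc [inl a] traverses
   [a] backwards at cost [-tau a] if [x a], and forwards at cost [tau a]
   otherwise. *)
Definition res_tl (x : A -> bool) (e : A + bool) : V :=
  match e with inl a => if x a then hd a else tl a | inr b => if b then t else s end.
Definition res_hd (x : A -> bool) (e : A + bool) : V :=
  match e with inl a => if x a then tl a else hd a | inr b => if b then s else t end.
Definition res_cost (x : A -> bool) (e : A + bool) : int :=
  match e with
  | inl a => if x a then - (tau a)%:R else (tau a)%:R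
  | inr b => if b then - T%:R else T%:R
  end.

Definition augment (x : A -> bool) (C : seq (A + bool)) a := x a (+) (inl a \in C).

(* The net number of times the cycle [C] returns from [t] to [s]. *)
Definition returns (C : seq (A + bool)) : int :=
  (inr true \in C)%:R - (inr false \in C)%:R.

Lemma excessE z v :
  excess z v = \sum_a ((hd a == v)%:R - (tl a == v)%:R) * (z a)%:R.
Proof.
rewrite /excess (big_mkcond (fun a => hd a == v)) (big_mkcond (fun a => tl a == v)).
rewrite -sumrB; apply: eq_bigr => a _.
by rewrite mulrBl; case: (hd a == v); case: (tl a == v); rewrite ?mul1r ?mul0r.
Qed.

Section Augment.
Variables (x : A -> bool) (e0 : A + bool) (W : seq (A + bool)).
Hypotheses (uniq_C : uniq (e0 :: W))
  (cycle_C : walk_to (res_tl x) (res_hd x) (res_tl x e0) (e0 :: W)).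
Local Notation C := (e0 :: W).

Lemma excess_augment v :
  excess (augment x C) v = excess x v + returns C * ((t == v)%:R - (s == v)%:R).
Proof.
have telescope : \sum_a (if inl a \in C
      then (res_hd x (inl a) == v)%:R - (res_tl x (inl a) == v)%:R else 0)
    = returns C * ((t == v)%:R - (s == v)%:R).
  have /eqP := telescope_walk_to v cycle_C.
  rewrite subrr (big_uniq_sumType _ uniq_C) big_bool.
  rewrite addr_eq0 => /eqP ->; rewrite /returns.
  by case: (inr true \in _); case: (inr false \in _); rewrite /=; ring.
rewrite -telescope !excessE -big_split /=; apply: eq_bigr => a _.
by rewrite /augment /=; case: (x a); case: (inl a \in C) => /=; ring.
Qed.

Lemma conserving_augment : conserving x -> conserving (augment x C).
Proof.
move=> cx; apply/forallP => v; apply/implyP => vs; apply/implyP => vt.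
rewrite excess_augment (conserving_excess cx vs vt).
by rewrite (eq_sym t) (negbTE vt) (eq_sym s) (negbTE vs) subrr mulr0 addr0.
Qed.

Lemma repeated_value_augment :
  repeated_value (augment x C) = repeated_value x - walk_cost (res_cost x) C.
Proof.
have cost_aug : flow_cost (augment x C)
    = flow_cost x + \sum_a (if inl a \in C then res_cost x (inl a) else 0).
  rewrite /flow_cost -big_split /=; apply: eq_bigr => a _.
  by rewrite /augment /=; case: (x a); case: (inl a \in C) => /=; rewrite ?mul1n ?mul0n; ring.
rewrite /repeated_value /flow_value excess_augment cost_aug eqxx (negbTE s_neq_t).
rewrite /walk_cost (big_uniq_sumType _ uniq_C) big_bool /returns.
by case: (inr true \in C); case: (inr false \in C); rewrite /=; ring.
Qed.

End Augment.

Lemma optimal_conserving_flow : exists2 x, conserving x &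
  forall y, conserving y -> repeated_value y <= repeated_value x.
Proof.
have zero_conserving : conserving [ffun=> false].
  apply/forallP => v; apply/implyP => _; apply/implyP => _.
  by rewrite /excess !big1 ?subrr // => a _; rewrite ffunE.
case: (@arg_maxP _ _ _ _ (fun x : {ffun A -> bool} => conserving x)
  (fun x => repeated_value x) zero_conserving) => x cx x_max.
exists x => // y; have -> : y = [ffun a => y a] by apply/funext => a; rewrite ffunE.
exact: x_max.
Qed.

Lemma optimal_no_negative_cycle x : conserving x ->
  (forall y, conserving y -> repeated_value y <= repeated_value x) ->
  forall e0 W, uniq (e0 :: W) -> walk_to (res_tl x) (res_hd x) (res_tl x e0) (e0 :: W) ->
  0 <= walk_cost (res_cost x) (e0 :: W).
Proof.
move=> cx x_opt e0 W uC wC.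
have := x_opt _ (conserving_augment uC wC cx).
by rewrite repeated_value_augment // gerBl.
Qed.

Section Potential.
Variables (x : A -> bool) (pi : V -> int).
Hypothesis pi_feasible : forall e, pi (res_hd x e) <= pi (res_tl x e) + res_cost x e.

Lemma potential_span : pi t - pi s = T%:R.
Proof.
have /= h_false := pi_feasible (inr false); have /= h_true := pi_feasible (inr true).
by apply/eqP; rewrite eq_le lerBlDl h_false lerBrDr addrC -lerBrDr h_true.
Qed.

Lemma sum_potential_excess : \sum_v pi v * excess x v
  = \sum_a (x a)%:R * (pi (hd a) - pi (tl a)).
Proof.
under eq_bigr do rewrite mulrBr !mulr_sumr.
rewrite sumrB !(big_fiber _ _ (fun v a => pi v * (x a)%:R)) -sumrB.
by apply: eq_bigr => a _; rewrite mulrBr mulrC [_ * (x a)%:R]mulrC.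
Qed.

(* The optimality conditions make every arc of [x] tight or slack the right
   way, so that [repeated_value x] is the dual objective. *)
Lemma repeated_value_potential : conserving x ->
  repeated_value x = \sum_a Num.max 0 (pi (hd a) - pi (tl a) - (tau a)%:R).
Proof.
move=> cx.
have arcwise a : Num.max 0 (pi (hd a) - pi (tl a) - (tau a)%:R)
    = (x a)%:R * (pi (hd a) - pi (tl a)) - (x a * tau a)%:R.
  have := pi_feasible (inl a); rewrite /=; case: (x a) => /= feas.
    by rewrite mul1r mul1n max_r //; lia.
  by rewrite mul0r mul0n sub0r oppr0 max_l //; lia.
rewrite (eq_bigr _ (fun a _ => arcwise a)) sumrB -sum_potential_excess.
rewrite (bigD1 s) //= (bigD1 t) 1?eq_sym //= big1 => [|v /andP [vs vt]]; last first.
  by rewrite (conserving_excess cx vs vt) mulr0.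
rewrite (excess_source s_neq_t cx) addr0 /repeated_value /flow_cost -natr_sum -potential_span.
by rewrite /flow_value; ring.
Qed.

End Potential.

End ResidualNetwork.

Lemma count_ord_in_itv (lo hi : int) N :
  ((\sum_(k < N) ((lo <= k%:R)%R && (k%:R < hi)%R))%N%:R : int) <= Num.max 0 (hi - lo).
Proof.
pose count n := ((\sum_(k < n) ((lo <= k%:R)%R && (k%:R < hi)%R))%N%:R : int).
suff bound n : count n <= Num.max 0 (n%:R - lo) /\ count n <= Num.max 0 (hi - lo).
  by case: (bound N).
elim: n => [|n [IH1 IH2]]; first by rewrite /count big_ord0; split; rewrite le_max lexx.
move: IH1 IH2; rewrite /count big_ord_recr /= natrD -natr1.
set c := (\sum_(i < n) _)%N; clearbody c.
by case: (boolP ((lo <= n%:R) && (n%:R < hi))) => [/andP []|] /=; lia.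
Qed.

Section TrainsCrossPotential.
Variables (V A : finType) (tl hd : A -> V) (s t : V) (tau : A -> nat) (d Delta OPT : nat).
Variables (P : 'I_d -> seq A) (lam : 'I_d -> A -> nat) (pi : V -> int).
Hypotheses (routing : feasible_routing tl hd s t tau Delta P lam)
  (makespan_OPT : makespan tau P lam = OPT) (pi_span : pi t - pi s = (OPT + Delta)%:R).

Let rho v := pi v - pi s.

Lemma exit_time_le_OPT i a : a \in P i -> (lam i a + tau a <= OPT)%N.
Proof.
move=> aP; rewrite -makespan_OPT /makespan; apply: leq_trans (leq_bigmax i).
exact: (leq_bigmax_seq (P := xpredT)).
Qed.

Definition crosses i delta a := [&& a \in P i, rho (tl a) <= (lam i a + delta)%:R
  & (lam i a + delta + tau a)%:R < rho (hd a)].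

Lemma path_crosses (lf : A -> nat) (delta : nat) p a0 :
  path (fun a b => hd a == tl b) a0 p -> path (fun a b => lf a + tau a <= lf b)%N a0 p ->
  rho (tl a0) <= (lf a0 + delta)%:R ->
  (lf (last a0 p) + delta + tau (last a0 p))%:R < rho (hd (last a0 p)) ->
  exists2 a, a \in a0 :: p &
    (rho (tl a) <= (lf a + delta)%:R) && ((lf a + delta + tau a)%:R < rho (hd a)).
Proof.
elim: p a0 => [|a1 p IH] a0 /= => [_ _ tl_a0 hd_last|/andP [/eqP hd_a0 walk_p]].
  by exists a0; rewrite ?mem_head ?tl_a0.
case/andP=> time_a0 times_p tl_a0 hd_last.
case: (ltP (lf a0 + delta + tau a0)%:R (rho (hd a0))) => [hd_a0_gt|hd_a0_le].
  by exists a0; rewrite ?mem_head ?tl_a0.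
have [|a ain cross] := IH a1 walk_p times_p _ hd_last.
  by rewrite -hd_a0; apply: le_trans hd_a0_le _; rewrite ler_nat; lia.
by exists a; rewrite // inE ain orbT.
Qed.

Lemma crossing_exists i (delta : 'I_Delta) : exists a, crosses i delta a.
Proof.
have [st_path [timed _]] := routing.
move: (st_path i) (timed i) (@exit_time_le_OPT i); rewrite /crosses.
case: (P i) => [//|a0 p] /and4P [/eqP tl_a0 walk_p /eqP hd_last _] times_p exit_le.
have [||a ain /andP [c1 c2]] := path_crosses walk_p times_p (delta := delta).
- by rewrite tl_a0 /rho subrr ler0n.
- rewrite hd_last /rho pi_span ltr_nat.
  by have := exit_le (last a0 p) (mem_last _ _); have := ltn_ord delta; lia.
by exists a; rewrite ain c1 c2.
Qed.

Lemma crosses_inj i j (delta delta' : 'I_Delta) a :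
  crosses i delta a -> crosses j delta' a -> (lam i a + delta = lam j a + delta')%N ->
  (i, delta) = (j, delta').
Proof.
move=> /and3P [aPi _ _] /and3P [aPj _ _].
case: (eqVneq i j) => [<-|i_neq_j] same_time.
  by congr (_, _); apply: val_inj => /=; lia.
have [_ [_ /(_ i j i_neq_j a aPi aPj)]] := routing.
by have := ltn_ord delta; have := ltn_ord delta'; lia.
Qed.

Definition crossing_slots := [set p : A * 'I_(OPT + Delta).+1 |
  (rho (tl p.1) <= (p.2 : nat)%:R) && (((p.2 : nat) + tau p.1)%:R < rho (hd p.1))].

Lemma card_crossing_slots_ge : (d * Delta <= #|crossing_slots|)%N.
Proof.
have [cross crossP] := choice (fun u : 'I_d * 'I_Delta => crossing_exists u.1 u.2).
pose slot u := (cross u, inord (lam u.1 (cross u) + u.2) : 'I_(OPT + Delta).+1).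
have slotE u : ((slot u).2 : nat) = (lam u.1 (cross u) + u.2)%N.
  rewrite inordK // ltnS; case/and3P: (crossP u) => /exit_time_le_OPT + _ _.
  by have := ltn_ord u.2; lia.
have slot_inj : injective slot.
  move=> u v eq_slot; have eq_a : cross u = cross v := f_equal fst eq_slot.
  have eq_time : (lam u.1 (cross u) + u.2 = lam v.1 (cross v) + v.2)%N.
    by rewrite -!slotE eq_slot.
  move: (crossP u) (crossP v) eq_time; rewrite -eq_a.
  by case: u v {eq_slot eq_a} => [i delta] [j delta']; exact: crosses_inj.
have <- : #|[set: 'I_d * 'I_Delta]| = (d * Delta)%N by rewrite cardsT card_prod !card_ord.
rewrite -(card_imset _ slot_inj); apply: subset_leq_card.
apply/fintype.subsetP => _ /imsetP [u _ ->]; rewrite inE slotE.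
by case/and3P: (crossP u) => _ -> ->.
Qed.

Lemma card_crossing_slots_le :
  (#|crossing_slots|%:R : int) <= \sum_a Num.max 0 (pi (hd a) - pi (tl a) - (tau a)%:R).
Proof.
pose in_slot a (k : 'I_(OPT + Delta).+1) :=
  ((rho (tl a) <= k%:R) && (k%:R < rho (hd a) - (tau a)%:R) : nat).
rewrite -sum1_card big_mkcond /= (eq_bigr (fun p => in_slot p.1 p.2)); last first.
  by move=> p _; rewrite inE /in_slot natrD -ltrBrDr; case: ifP.
rewrite -(pair_bigA _ in_slot) /= natr_sum.
apply: ler_sum => a _; apply: le_trans (count_ord_in_itv _ _ _) _.
by rewrite /rho; lia.
Qed.

Lemma trains_cross_potential :
  ((d * Delta)%:R : int) <= \sum_a Num.max 0 (pi (hd a) - pi (tl a) - (tau a)%:R).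
Proof.
by apply: le_trans card_crossing_slots_le; rewrite ler_nat card_crossing_slots_ge.
Qed.

End TrainsCrossPotential.

Theorem mainTheorem6 (R : realType) (V A : finType) (tl hd : A -> V)
  (s t : V) (tau : A -> nat) (d Delta OPT : nat) :
  s != t -> (0 < d)%N -> (0 < Delta)%N ->
  reachable tl hd s t ->
  is_OPT tl hd s t tau d Delta OPT ->
  exists f : A -> R -> R,
    flow_over_time tl hd s t tau ((OPT + Delta)%:R : R) f /\
    (((d * Delta)%:R : R)%:E <= fot_value tl hd t f)%E.
Proof.
move=> s_neq_t _ _ _ [[P [lam [routing makespan_OPT]]] _].
have [x cx x_opt] := optimal_conserving_flow tl hd s t tau (OPT + Delta).
have [pi pi_feasible] := potential_exists (optimal_no_negative_cycle s_neq_t cx x_opt).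
have trains_le := trains_cross_potential routing makespan_OPT (potential_span pi_feasible).
rewrite -(repeated_value_potential s_neq_t pi_feasible cx) in trains_le.
have [c [w [_ horizon cons value_le]]] :=
  repeated_schedule_exists tau (OPT + Delta) s_neq_t R cx.
have [fot value_f] := flow_over_time_of_schedule horizon cons.
exists (fun a => window (c a) (w a)); split => //.
rewrite value_f lee_fin lerBrDl -natrD ler_nat -(ler_nat int) natrD -lerBrDl.
exact: le_trans trains_le value_le.
Qed.
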